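(* Each formula $\Phi\in\mathtt{incl}$-$\mathtt{ESO}$-$\mathtt{HORN}$ is equivalent (i.e. $\langle w\rangle\models\Phi\iff\langle w\rangle\models\Phi'$ for all $w\in\Sigma^+$) to a formula $\Phi'=\exists\mathbf{R}'\forall x\forall y\,\psi'\in\mathtt{incl}$-$\mathtt{ESO}$-$\mathtt{HORN}$ each of whose clauses is of one of the following forms: (i) an input clause $x=y\wedge Q_s(x)\to R(x,y)$, for $s\in\Sigma$, $R\in\mathbf{R}'$; (ii) the contradiction clause $\mathtt{min}(x)\wedge\mathtt{max}(y)\wedge R_\bot(x,y)\to\bot$, for a fixed $R_\bot\in\mathbf{R}'$; (iii) a computation clause $x<y\wedge\delta_1\wedge\cdots\wedge\delta_r\to R(x,y)$, with $R\in\mathbf{R}'$, where each hypothesis $\delta_i$ is an atom of the form $S(x+1,y)$ or $S(x,y-1)$ for $S\in\mathbf{R}'$.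
   Context: Fix a finite alphabet $\Sigma$. A nonempty word $w=w_1\cdots w_n$ is represented by the structure $\langle w\rangle=([1,n];(Q_s)_{s\in\Sigma},\mathtt{min},\mathtt{max},\mathtt{suc},\mathtt{pred})$ with $Q_s(i)\iff w_i=s$, $\mathtt{min}(i)\iff i=1$, $\mathtt{max}(i)\iff i=n$, $\mathtt{suc}(i)=\min(i+1,n)$, $\mathtt{pred}(i)=\max(i-1,1)$. For an integer $a$, $x+a$ denotes $\mathtt{suc}^a(x)$ if $a\ge0$ and $\mathtt{pred}^{-a}(x)$ if $a<0$; $y-b=\mathtt{pred}^b(y)$. A formula of $\mathtt{incl}$-$\mathtt{ESO}$-$\mathtt{HORN}$ (inclusion Horn formula) is $\Phi=\exists\mathbf{R}\forall x\forall y\,\psi(x,y)$, $\mathbf{R}$ a finite set of binary relation symbols, $\psi$ a conjunction of Horn clauses over the signature $\{(Q_s)_{s\in\Sigma},\mathtt{min},\mathtt{max},\mathtt{suc},\mathtt{pred}\}\cup\mathbf{R}\cup\{=,\le,<\}$ (usual order on $[1,n]$), each of the form $x\le y\wedge\delta_1\wedge\cdots\wedge\delta_r\to\delta_0$ with $\delta_0$ an atom $R(x,y)$ ($R\in\mathbf{R}$) or $\bot$, and each $\delta_i$ one of: $U(x+a)$, $\neg U(x+a)$, $U(y+a)$, $\neg U(y+a)$ for $U\in\{(Q_s)_{s\in\Sigma},\mathtt{min},\mathtt{max}\}$ and $a\in\mathbb Z$; $x=y$ or $x<y$; a conjunction $S(x+a,y-b)\wedge x+a\le y-b$ with $S\in\mathbf{R}$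 and integers $a,b\ge0$. (In the normal form, the leading hypothesis $x\le y$ of a clause is redundant when $x=y$ or $x<y$ is present.) *)

From mathcomp Require Import all_boot all_algebra.
From Stdlib Require List.
Set Implicit Arguments. Unset Strict Implicit. Unset Printing Implicit Defensive.

(* Syntax of incl-ESO-HORN formulas over an alphabet Sigma.
   Positions of a word w are 1..n with n = size w (w nonempty). *)

Section Syntax.
Variable Sigma : finType.

Inductive upred := UQ of Sigma | Umin | Umax.

Inductive var := VX | VY.

Inductive hyp (k : nat) :=
  | HU of bool (* true = positive literal, false = negated *) & upred & var & int
      (* U(v + a) or not U(v + a) *)
  | HEq
  | HLt
  | HRel of 'I_k & nat & nat  (* S(x+a, y-b) /\ x+a <= y-b,  a,b >= 0 *).

(* a Horn clause  x <= y /\ hyps -> head;  head = None means bottom *)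
Record clause (k : nat) := Clause { hyps : seq (hyp k); head : option 'I_k }.

(* Phi = exists R_0 .. R_{k-1} (binary), forall x forall y, /\ clauses *)
Record formula := Formula { nrel : nat; clauses : seq (clause nrel) }.

Variable w : seq Sigma.
Local Notation n := (size w).

(* x + a with the saturating suc / pred of <w> *)
Definition shiftp (i : nat) (a : int) : nat :=
  match a with
  | Posz m => minn (i + m) n
  | Negz m => maxn (i - m.+1) 1
  end.

Definition uholds (U : upred) (p : nat) : bool :=
  match U with
  | UQ s => onth w p.-1 == Some s
  | Umin => p == 1
  | Umax => p == n
  end.

Definition hsem k (I : 'I_k -> nat -> nat -> Prop) (x y : nat) (h : hyp k) : Prop :=
  match h with
  | HU pos U v a =>
      let p := shiftp (if v is VX then x else y) a in
      if pos then uholds U p else ~~ uholds U p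
  | HEq => x = y
  | HLt => x < y
  | HRel Sr a b =>
      let p := minn (x + a) n in
      let q := maxn (y - b) 1 in
      I Sr p q /\ p <= q
  end.

Definition clause_sat k (I : 'I_k -> nat -> nat -> Prop) (c : clause k) : Prop :=
  forall x y : nat, 1 <= x -> x <= y -> y <= n ->
    (forall h, List.In h (hyps c) -> hsem I x y h) ->
    match head c with
    | Some R => I R x y
    | None => False
    end.

Definition models (Phi : formula) : Prop :=
  exists I : 'I_(nrel Phi) -> nat -> nat -> Prop,
    forall c, List.In c (clauses Phi) -> clause_sat I c.

End Syntax.

Arguments HEq {Sigma k}.
Arguments HLt {Sigma k}.
Arguments HU {Sigma k}.
Arguments HRel {Sigma k}.

Section NormalForm.
Variable Sigma : finType.

Definition input_clause k (c : clause Sigma k) : Prop :=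
  exists (s : Sigma) (R : 'I_k),
    c = Clause [:: HEq; HU true (UQ s) VX (Posz 0)] (Some R).

Definition contradiction_clause k (Rbot : 'I_k) (c : clause Sigma k) : Prop :=
  c = Clause [:: HU true (@Umin Sigma) VX (Posz 0); HU true (@Umax Sigma) VY (Posz 0);
                 HRel Rbot 0 0] None.

Definition computation_clause k (c : clause Sigma k) : Prop :=
  exists (ds : seq (hyp Sigma k)) (R : 'I_k),
    c = Clause (HLt :: ds) (Some R) /\
    (forall d, List.In d ds ->
       exists S : 'I_k, d = HRel S 1 0 \/ d = HRel S 0 1).

Definition normal_form (Phi : formula Sigma) : Prop :=
  exists Rbot : 'I_(nrel Phi),
    forall c, List.In c (clauses Phi) ->
      input_clause c \/ contradiction_clause Rbot c \/ computation_clause c.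

End NormalForm.

From Pilot Require Import Defs.
From mathcomp Require Import all_boot all_algebra zify boolp.
From Stdlib Require List.
Set Implicit Arguments. Unset Strict Implicit. Unset Printing Implicit Defensive.

(* The definite clauses of Phi have a least model on every word, and <w>
   satisfies Phi iff no clause with head bot fires on it.  As the atoms of
   Phi look at most c positions away, the least model near a corner (x, y)
   of a factor z, and the firing of bot-clauses inside z, only depend on z
   and on 2c + 2 letters of context on each side; this is shown by
   simulating one least model inside the other.  So the finite "state" of
   z (its first and last 2c + 3 letters, and these answers for all short
   contexts) is determined by the states of z without its first and
   without its last letter.  The normal form guesses the state t of each
   factor w[x..y] as R_t(x, y), reading letters with input clauses and
   combining the states at (x+1, y) and (x, y-1) with computation clauses;
   R_bot marks rejecting states and is forbidden at (1, n). *)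

Lemma leq_bigmax_In (T : Type) (F : T -> nat) s x :
  List.In x s -> F x <= \max_(y <- s) F y.
Proof.
elim: s => //= y s IH; rewrite big_cons => -[<-|/IH H]; first exact: leq_maxl.
exact: leq_trans H (leq_maxr _ _).
Qed.

Lemma forall_In_cons (T : Type) (P : T -> Prop) x s :
  (forall y, List.In y (x :: s) -> P y) <-> P x /\ (forall y, List.In y s -> P y).
Proof.
split=> [H|[Px H] y [<-|/H]] //.
by split=> [|y Hy]; apply: H; [left | right].
Qed.

Lemma In_enum (T : finType) (x : T) : List.In x (enum T).
Proof.
have : x \in enum T by rewrite mem_enum.
by elim: (enum T) => //= y s IH; rewrite in_cons => /predU1P [->|/IH]; auto.
Qed.

Lemma eq_from_onth_le (T : Type) n (s1 s2 : seq T) : size s1 <= n ->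
  (forall i, i <= n -> onth s1 i = onth s2 i) -> s1 = s2.
Proof.
move=> Hs E; have Hs2 : size s2 <= n by rewrite -onthNE -E // onth_default.
apply: eq_from_onth => i; have [/E //|Hi] := leqP i n.
by rewrite !onth_default //; lia.
Qed.

Lemma onth0_rcons (T : Type) (s : seq T) x : 0 < size s -> onth (rcons s x) 0 = onth s 0.
Proof. by case: s. Qed.

Lemma size_cons_rcons (T : Type) (x : T) t s e : x :: t = rcons s e -> size s = size t.
Proof. by move/(congr1 size); rewrite size_rcons => -[]. Qed.

Lemma val_insub_bseq (T : Type) n (s : seq T) : size s <= n -> insub_bseq n s = s :> seq T.
Proof. by move=> Hs; rewrite /insub_bseq /= insubdK. Qed.

Section Normalization.
Variables (Sigma : finType) (Phi : formula Sigma).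
Local Notation k := (nrel Phi).
Local Notation interp := ('I_k -> nat -> nat -> Prop).
Local Notation span u x y := (1 <= x /\ x <= y /\ y <= size u).

(** * Least models *)

Definition definite_model (u : seq Sigma) (J : interp) :=
  forall cl, List.In cl (clauses Phi) -> Defs.head cl <> None -> clause_sat u J cl.

Definition least_model (u : seq Sigma) R x y : Prop := forall J, definite_model u J -> J R x y.

Definition violated (u : seq Sigma) x y : Prop :=
  exists cl, [/\ List.In cl (clauses Phi), Defs.head cl = None, span u x y &
    forall h, List.In h (hyps cl) -> hsem u (least_model u) x y h].

Lemma hsem_mono (u : seq Sigma) (I J : interp) x y h :
  (forall R p q, I R p q -> J R p q) -> hsem u I x y h -> hsem u J x y h.
Proof. by move=> IJ; case: h => //= S a b [/IJ]. Qed.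

Lemma least_model_definite (u : seq Sigma) : definite_model u (least_model u).
Proof.
move=> [hs [R|]] Hcl Hh x y H1 H2 H3 Hhy //= J HJ.
by apply: (HJ _ Hcl Hh x y H1 H2 H3) => h /Hhy; apply: hsem_mono => R' p q /(_ J HJ).
Qed.

Lemma least_model_range (u : seq Sigma) R x y : least_model u R x y -> span u x y.
Proof.
by move/(_ (fun _ x y => span u x y)); apply=> -[hs [R'|]] _ Hh x' y' H1 H2 H3.
Qed.

Lemma violated_range (u : seq Sigma) x y : violated u x y -> span u x y.
Proof. by case=> ? []. Qed.

Lemma models_iff_no_violation (u : seq Sigma) : models u Phi <-> ~ exists x y, violated u x y.
Proof.
split.
- move=> [I HI] [x [y [cl [Hcl Hn [H1 [H2 H3]] Hh]]]].
  have LI R p q : least_model u R p q -> I R p q.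
    by apply; move=> cl' Hcl' _; exact: HI.
  have := HI cl Hcl x y H1 H2 H3; rewrite Hn; apply=> h /Hh; exact: hsem_mono.
- move=> NV; exists (least_model u) => cl Hcl.
  case Hn: (Defs.head cl) => [R|]; first by apply: least_model_definite; rewrite // Hn.
  move=> x y H1 H2 H3 Hh; rewrite Hn; apply: NV; exists x, y, cl; split=> //.
Qed.

Definition transfers (u v : seq Sigma) (M : nat -> nat -> nat -> nat -> Prop)
    x y x' y' (h : hyp Sigma k) : Prop :=
  match h with
  | HU _ U VX a => uholds u U (shiftp u x a) = uholds v U (shiftp v x' a)
  | HU _ U VY a => uholds u U (shiftp u y a) = uholds v U (shiftp v y' a)
  | HEq => x = y <-> x' = y'
  | HLt => x < y <-> x' < y'
  | HRel _ a b =>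
      let p := minn (x + a) (size u) in let q := maxn (y - b) 1 in
      let p' := minn (x' + a) (size v) in let q' := maxn (y' - b) 1 in
      p <= q -> p' <= q' /\
      (M p q p' q' \/ forall R, least_model u R p q -> least_model v R p' q')
  end.

Lemma hsem_transfers (u v : seq Sigma) M x y x' y' h (J : interp) :
  (forall R p q, J R p q ->
     least_model u R p q /\ forall p' q', M p q p' q' -> least_model v R p' q') ->
  transfers u v M x y x' y' h -> hsem u J x y h -> hsem v (least_model v) x' y' h.
Proof.
move=> HJ; case: h => [pos U [] a|||S a b] /=; try by move=> ->.
move=> Hc [/HJ [H1 H2] Hpq]; have [Hpq' [HM|HO]] := Hc Hpq; split=> //.
- exact: H2.
- exact: HO.
Qed.

Section Simulation.
Variables (u v : seq Sigma) (M : nat -> nat -> nat -> nat -> Prop).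
Hypothesis M_range : forall x y x' y', M x y x' y' -> span v x' y'.
Hypothesis M_transfers : forall x y x' y' cl h, M x y x' y' ->
  List.In cl (clauses Phi) -> List.In h (hyps cl) -> transfers u v M x y x' y' h.

(* The least model of [u], cut down to the facts whose [M]-images hold in
   the least model of [v], is still a model. *)
Lemma least_model_sim x y x' y' : M x y x' y' ->
  (forall R, least_model u R x y -> least_model v R x' y') /\
  (violated u x y -> violated v x' y').
Proof.
pose J R x y := least_model u R x y /\
  forall x' y', M x y x' y' -> least_model v R x' y'.
have HJ : definite_model u J.
  move=> [hs [R|]] Hcl Hh p q H1 H2 H3 Hhy //=; split.
  - apply: (least_model_definite Hcl Hh H1 H2 H3) => h /Hhy.
    by apply: hsem_mono => ? ? ? [].
  - move=> p' q' HM; have [H1' [H2' H3']] := M_range HM.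
    apply: (least_model_definite Hcl Hh H1' H2' H3') => h Hin.
    by apply: (hsem_transfers (J := J)) (M_transfers HM Hcl Hin) (Hhy _ Hin) => ? ? ? [].
move=> HM; split; first by move=> R /(_ J HJ) [_ /(_ _ _ HM)].
move=> [cl [Hcl Hn _ Hh]]; have [H1' [H2' H3']] := M_range HM.
exists cl; split=> // h Hin.
apply: (hsem_transfers (J := J)) (M_transfers HM Hcl Hin) _; first by move=> ? ? ? [].
by apply: hsem_mono (Hh _ Hin) => R p q /(_ J HJ).
Qed.

End Simulation.

Definition converse (M : nat -> nat -> nat -> nat -> Prop) x' y' x y := M x y x' y'.

Lemma least_model_bisim (u v : seq Sigma) M x y x' y' :
  (forall x y x' y', M x y x' y' -> span u x y /\ span v x' y') ->
  (forall x y x' y' cl h, M x y x' y' ->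
     List.In cl (clauses Phi) -> List.In h (hyps cl) ->
     transfers u v M x y x' y' h /\ transfers v u (converse M) x' y' x y h) ->
  (span u x y \/ span v x' y' -> M x y x' y') ->
  (forall R, least_model u R x y <-> least_model v R x' y') /\
  (violated u x y <-> violated v x' y').
Proof.
move=> Mr Mt HM.
have simUV H := least_model_sim (fun _ _ _ _ H => proj2 (Mr _ _ _ _ H))
  (fun _ _ _ _ _ _ H Hcl Hh => proj1 (Mt _ _ _ _ _ _ H Hcl Hh)) (HM H).
have simVU H := @least_model_sim v u (converse M)
  (fun _ _ _ _ H => proj1 (Mr _ _ _ _ H))
  (fun _ _ _ _ _ _ H Hcl Hh => proj2 (Mt _ _ _ _ _ _ H Hcl Hh)) _ _ _ _ (HM H).
split=> [R|]; split=> H.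
- exact: (simUV (or_introl (least_model_range H))).1 _ H.
- exact: (simVU (or_intror (least_model_range H))).1 _ H.
- exact: (simUV (or_introl (violated_range H))).2 H.
- exact: (simVU (or_intror (violated_range H))).2 H.
Qed.

(** * Locality *)

Definition hyp_offset (h : hyp Sigma k) : nat :=
  match h with HU _ _ _ a => absz a | HRel _ a b => maxn a b | _ => 0 end.

Definition radius : nat := \max_(cl <- clauses Phi) \max_(h <- hyps cl) hyp_offset h.
Local Notation c := radius.

Lemma hyp_offset_le cl h :
  List.In cl (clauses Phi) -> List.In h (hyps cl) -> hyp_offset h <= c.
Proof.
move=> Hcl Hh; apply: leq_trans (leq_bigmax_In hyp_offset Hh) _.
exact: (leq_bigmax_In (fun cl => \max_(h <- hyps cl) hyp_offset h) Hcl).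
Qed.

Section DropFirst.
Variables (s0 : Sigma) (u : seq Sigma).

Lemma shiftp_cons x a : c + 3 <= x -> x <= (size u).+1 -> absz a <= c ->
  shiftp (s0 :: u) x a = (shiftp u x.-1 a).+1 /\ 3 <= shiftp (s0 :: u) x a.
Proof. by case: a => m /= *; split; lia. Qed.

Lemma uholds_cons U p : 3 <= p -> uholds (s0 :: u) U p = uholds u U p.-1.
Proof. by case: p => [|[|[|p]]] //= _; case: U. Qed.

Definition drop_first x y x' y' :=
  [/\ x' = x.-1, y' = y.-1, c + 3 <= x, x <= y & y <= (size u).+1].

Lemma transfers_drop_first x y x' y' cl h : drop_first x y x' y' ->
  List.In cl (clauses Phi) -> List.In h (hyps cl) ->
  transfers (s0 :: u) u drop_first x y x' y' h /\
  transfers u (s0 :: u) (converse drop_first) x' y' x y h.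
Proof.
move=> [-> -> H1 H2 H3] Hcl Hh; have := hyp_offset_le Hcl Hh.
case: h {Hh} => [pos U [] a|||S a b] /= Hb.
- have [E L] := shiftp_cons H1 (leq_trans H2 H3) Hb.
  by rewrite (uholds_cons _ L) E.
- have [E L] := shiftp_cons (leq_trans H1 H2) H3 Hb.
  by rewrite (uholds_cons _ L) E.
- lia.
- lia.
- by rewrite /converse /drop_first; split=> Hpq; (split; first lia); left; split; lia.
Qed.

Lemma drop_first_iff p q : c + 3 <= p ->
  (forall R, least_model (s0 :: u) R p q <-> least_model u R p.-1 q.-1) /\
  (violated (s0 :: u) p q <-> violated u p.-1 q.-1).
Proof.
move=> Hp; apply: (least_model_bisim (M := drop_first)); last by move=> /= ?; split; lia.
- by move=> x y x' y' [-> -> *] /=; lia.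
- exact: transfers_drop_first.
Qed.

End DropFirst.

Section DropLast.
Variables (u : seq Sigma) (s0 : Sigma).

Lemma shiftp_rcons x a : 1 <= x -> x + c + 1 <= size u -> absz a <= c ->
  shiftp (rcons u s0) x a = shiftp u x a /\
  1 <= shiftp u x a /\ shiftp u x a < size u.
Proof. by rewrite /shiftp size_rcons; case: a => m /= *; split; lia. Qed.

Lemma uholds_rcons U p : 1 <= p -> p < size u -> uholds (rcons u s0) U p = uholds u U p.
Proof.
move=> H1 H2; case: U => //= [s|].
- by rewrite -cats1 onth_cat; have -> : p.-1 < size u by lia.
- by rewrite size_rcons; apply/eqP/eqP; lia.
Qed.

Definition drop_last x y x' y' :=
  [/\ x' = x, y' = y, 1 <= x, x <= y & y + c + 1 <= size u].

Lemma transfers_drop_last x y x' y' cl h : drop_last x y x' y' ->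
  List.In cl (clauses Phi) -> List.In h (hyps cl) ->
  transfers (rcons u s0) u drop_last x y x' y' h /\
  transfers u (rcons u s0) (converse drop_last) x' y' x y h.
Proof.
move=> [-> -> H1 H2 H3] Hcl Hh; have := hyp_offset_le Hcl Hh.
case: h {Hh} => [pos U [] a|||S a b] /= Hb.
- have Hx : x + c + 1 <= size u by lia.
  have [E [L1 L2]] := shiftp_rcons H1 Hx Hb.
  by rewrite E (uholds_rcons _ L1 L2).
- have [E [L1 L2]] := shiftp_rcons (leq_trans H1 H2) H3 Hb.
  by rewrite E (uholds_rcons _ L1 L2).
- lia.
- lia.
- rewrite /converse /drop_last size_rcons.
  by split=> Hpq; (split; first lia); left; split; lia.
Qed.

Lemma drop_last_iff p q : q + c + 1 <= size u ->
  (forall R, least_model (rcons u s0) R p q <-> least_model u R p q) /\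
  (violated (rcons u s0) p q <-> violated u p q).
Proof.
move=> Hq; apply: (least_model_bisim (M := drop_last)); last by move=> /= ?; split; lia.
- by move=> x y x' y' [-> -> *]; rewrite size_rcons; lia.
- exact: transfers_drop_last.
Qed.

End DropLast.

Local Notation width := (c + c + 2).

Definition corner_lm (z l r : seq Sigma) a b R :=
  least_model (l ++ z ++ r) R (size l + 1 + a) (size l + size z - b).

Section Corner.
Variables (l z1 z2 r : seq Sigma).
Hypothesis prefix_eq : forall i, i <= c -> onth z1 i = onth z2 i.
Hypothesis suffix_eq : forall i, i <= c -> onth (rev z1) i = onth (rev z2) i.
Hypothesis long_z1 : width < size z1.
Hypothesis long_z2 : width < size z2.
Hypothesis near_corner : forall a b R, a <= c -> b <= c -> 0 < a + b ->
  corner_lm z1 l r a b R -> corner_lm z2 l r a b R.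

Local Notation u1 := (l ++ z1 ++ r).
Local Notation u2 := (l ++ z2 ++ r).

Lemma onth_corner_left i : i <= size l + c -> onth u1 i = onth u2 i.
Proof.
move=> Hi; rewrite !onth_cat; case: ifP => // Hl.
have -> : i - size l < size z1 by lia.
have -> : i - size l < size z2 by lia.
apply: prefix_eq; lia.
Qed.

Lemma onth_rev_cat (z : seq Sigma) j : j < size z ->
  onth (l ++ z ++ r) (size l + size z - j.+1) = onth (rev z) j.
Proof.
move=> Hj; rewrite !onth_cat ifF; last lia.
rewrite ifT; last lia.
rewrite (_ : size l + size z - j.+1 - size l = size z - j.+1); last lia.
by rewrite !onthE map_rev nth_rev ?size_map.
Qed.

Lemma onth_corner_right j : j <= c ->
  onth u1 (size l + size z1 - j.+1) = onth u2 (size l + size z2 - j.+1).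
Proof. by move=> Hj; rewrite !onth_rev_cat ?suffix_eq //; lia. Qed.

Lemma onth_cat_right (z : seq Sigma) j :
  onth (l ++ z ++ r) (size l + size z + j) = onth r j.
Proof. by rewrite !onth_cat ifF 1?ifF; [congr onth|..]; lia. Qed.

Lemma uholds_corner_left U a : absz a <= c ->
  uholds u1 U (shiftp u1 (size l + 1) a) = uholds u2 U (shiftp u2 (size l + 1) a).
Proof.
move=> Ha.
have [E Lp] : shiftp u1 (size l + 1) a = shiftp u2 (size l + 1) a /\
    1 <= shiftp u2 (size l + 1) a <= size l + 1 + c.
  by rewrite /shiftp !size_cat; case: a Ha => m /= Ha; split; lia.
rewrite E; case: U => [s||] //=; first by rewrite onth_corner_left //; lia.
by apply/eqP/eqP; move: Lp; rewrite !size_cat; lia.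
Qed.

Lemma uholds_corner_right U a : absz a <= c ->
  uholds u1 U (shiftp u1 (size l + size z1) a) =
  uholds u2 U (shiftp u2 (size l + size z2) a).
Proof.
case: a => m /= Ha.
- have -> : minn (size l + size z1 + m) (size u1) = size l + size z1 + minn m (size r).
    by rewrite !size_cat; lia.
  have -> : minn (size l + size z2 + m) (size u2) = size l + size z2 + minn m (size r).
    by rewrite !size_cat; lia.
  case: U => [s||] /=.
  + case: (minn m (size r)) => [|d]; last by rewrite !addnS /= !onth_cat_right.
    by rewrite !addn0 -!subn1 onth_corner_right.
  + by apply/eqP/eqP; lia.
  + by apply/eqP/eqP; rewrite !size_cat; lia.
- have -> : maxn (size l + size z1 - m.+1) 1 = size l + size z1 - m.+1 by lia.
  have -> : maxn (size l + size z2 - m.+1) 1 = size l + size z2 - m.+1 by lia.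
  case: U => [s||] /=.
  + by rewrite -!subn1 -!subnDA !addn1 onth_corner_right.
  + by apply/eqP/eqP; lia.
  + by apply/eqP/eqP; rewrite !size_cat; lia.
Qed.

Definition at_corner x y x' y' :=
  [/\ x = size l + 1, y = size l + size z1, x' = size l + 1 & y' = size l + size z2].

Lemma transfers_corner x y x' y' cl h : at_corner x y x' y' ->
  List.In cl (clauses Phi) -> List.In h (hyps cl) -> transfers u1 u2 at_corner x y x' y' h.
Proof.
move=> [-> -> -> ->] Hcl Hh; have := hyp_offset_le Hcl Hh.
case: h {Hh} => [pos U [] a|||S a b] /= Hb.
- exact: uholds_corner_left.
- exact: uholds_corner_right.
- lia.
- lia.
- rewrite !size_cat.
  have -> : minn (size l + 1 + a) (size l + (size z1 + size r)) = size l + 1 + a by lia.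
  have -> : minn (size l + 1 + a) (size l + (size z2 + size r)) = size l + 1 + a by lia.
  have -> : maxn (size l + size z1 - b) 1 = size l + size z1 - b by lia.
  have -> : maxn (size l + size z2 - b) 1 = size l + size z2 - b by lia.
  move=> _; split; first lia.
  have [Hab|Hab] := posnP (a + b); first by left; split; lia.
  by right=> R; apply: near_corner; lia.
Qed.

Lemma corner_transfer :
  (forall R, corner_lm z1 l r 0 0 R -> corner_lm z2 l r 0 0 R) /\
  (violated u1 (size l + 1) (size l + size z1) ->
   violated u2 (size l + 1) (size l + size z2)).
Proof.
rewrite /corner_lm !addn0 !subn0.
have HM : at_corner (size l + 1) (size l + size z1) (size l + 1) (size l + size z2) by [].
apply: (least_model_sim _ _ HM).
- by move=> x y x' y' [_ _ -> ->]; rewrite !size_cat; lia.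
- exact: transfers_corner.
Qed.

End Corner.

(** * States of factors *)

Definition inner_violation (z l r : seq Sigma) :=
  exists x y, [/\ size l + 1 <= x, y <= size l + size z & violated (l ++ z ++ r) x y].

Local Notation context := (width.-bseq Sigma).

Definition query : finType :=
  (('I_width.+1 * option Sigma + 'I_width.+1 * option Sigma) +
   (context * context * 'I_c.+1 * 'I_c.+1 * 'I_k + context * context))%type.

Definition query_holds (z : seq Sigma) (q : query) : Prop :=
  match q with
  | inl (inl (i, o)) => onth z i = o
  | inl (inr (i, o)) => onth (rev z) i = o
  | inr (inl (l, r, a, b, R)) => corner_lm z l r a b R
  | inr (inr (l, r)) => inner_violation z l r
  end.

Local Notation state_t := {ffun query -> bool}.

Definition state (z : seq Sigma) : state_t := [ffun q => `[< query_holds z q >]].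

Lemma state_eqP z1 z2 :
  state z1 = state z2 <-> forall q, query_holds z1 q <-> query_holds z2 q.
Proof.
split=> [E q | E]; last by apply/ffunP => q; rewrite !ffunE; exact: asbool_equiv_eq.
by apply: asbool_eq_equiv; rewrite -!(ffunE (fun q => `[< query_holds _ q >])) -/(state _) E.
Qed.

Section StateEq.
Variables z1 z2 : seq Sigma.
Hypothesis Ez : state z1 = state z2.

Lemma onth_state i : i <= width ->
  onth z1 i = onth z2 i /\ onth (rev z1) i = onth (rev z2) i.
Proof.
move=> Hi; move/state_eqP: Ez => E; split.
- by have /= := (E (inl (inl (inord i, onth z1 i)))).1; rewrite inordK // => /(_ erefl) ->.
- by have /= := (E (inl (inr (inord i, onth (rev z1) i)))).1; rewrite inordK // => /(_ erefl) ->.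
Qed.

Lemma corner_lm_state (l r : seq Sigma) a b R : size l <= width -> size r <= width ->
  a <= c -> b <= c -> corner_lm z1 l r a b R <-> corner_lm z2 l r a b R.
Proof.
move=> Hl Hr Ha Hb; move/state_eqP: Ez => /(_ (inr (inl (insub_bseq width l,
  insub_bseq width r, inord a, inord b, R)))) /=.
by rewrite !val_insub_bseq // !inordK.
Qed.

Lemma inner_violation_state (l r : seq Sigma) : size l <= width -> size r <= width ->
  inner_violation z1 l r <-> inner_violation z2 l r.
Proof.
move=> Hl Hr; move/state_eqP: Ez => /(_ (inr (inr (insub_bseq width l,
  insub_bseq width r)))) /=.
by rewrite !val_insub_bseq.
Qed.

End StateEq.

Definition push_left (l : seq Sigma) z0 := rcons (drop (size l - width.-1) l) z0.
Definition push_right zl (r : seq Sigma) := zl :: take width.-1 r.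

Lemma size_push_left l z0 : size l <= width -> size (push_left l z0) <= width.
Proof. by rewrite /push_left size_rcons size_drop; lia. Qed.

Lemma size_push_right zl r : size (push_right zl r) <= width.
Proof. by rewrite /push_right /= size_take_min; lia. Qed.

(* Moving the first letter of a factor into its left context shifts every
   position by [d], where [d = 1] exactly when the context overflows. *)
Lemma push_left_shift l z0 z r : size l <= width -> exists2 d, d <= 1 &
  size l + 1 = size (push_left l z0) + d /\
  forall x y, size l + 2 <= x ->
    (forall R, least_model (l ++ (z0 :: z) ++ r) R x y <->
               least_model (push_left l z0 ++ z ++ r) R (x - d) (y - d)) /\
    (violated (l ++ (z0 :: z) ++ r) x y <-> violated (push_left l z0 ++ z ++ r) (x - d) (y - d)).
Proof.
move=> Hl; rewrite /push_left; have [Hlt|Hge] := ltnP (size l) width.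
  exists 0 => //; have -> : size l - width.-1 = 0 by lia.
  rewrite drop0 size_rcons cat_rcons; split=> [|x y _]; first lia.
  by rewrite !subn0.
case: l Hl Hge => [|l0 l] /= Hl Hge; first lia.
exists 1 => //; have -> : (size l).+1 - width.-1 = 1 by lia.
rewrite drop1 /= size_rcons cat_rcons; split=> [|x y Hx]; first lia.
by rewrite !subn1; apply: drop_first_iff; lia.
Qed.

Lemma push_right_drop l zi zl r : size r <= width -> forall x y, y <= size l + size zi ->
  (forall R, least_model (l ++ rcons zi zl ++ r) R x y <->
             least_model (l ++ zi ++ push_right zl r) R x y) /\
  (violated (l ++ rcons zi zl ++ r) x y <-> violated (l ++ zi ++ push_right zl r) x y).
Proof.
move=> Hr x y Hy; rewrite /push_right cat_rcons.
have [Hlt|Hge] := ltnP (size r) width; first by rewrite take_oversize //; lia.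
case/lastP: r Hr Hge => [|r rl] Hr Hge; first by move: Hge => /=; lia.
rewrite size_rcons in Hr Hge.
rewrite -cats1 take_size_cat; last lia.
rewrite (_ : l ++ zi ++ zl :: r ++ [:: rl] = rcons (l ++ zi ++ zl :: r) rl); last first.
  by rewrite -cats1 -!catA.
apply: drop_last_iff; rewrite !size_cat /=; lia.
Qed.

Lemma corner_lm_behead l z0 z r a b R : size l <= width -> 1 <= a -> 1 <= size z ->
  corner_lm (z0 :: z) l r a b R <-> corner_lm z (push_left l z0) r a.-1 b R.
Proof.
move=> Hl Ha Hz; have [d Hd [Es V]] := push_left_shift z0 z r Hl.
rewrite /corner_lm (proj1 (V _ _ _) R); last lia.
have -> : size l + 1 + a - d = size (push_left l z0) + 1 + a.-1 by lia.
by have -> : size l + size (z0 :: z) - b - d = size (push_left l z0) + size z - b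
  by rewrite /=; lia.
Qed.

Lemma corner_lm_rcons l zi zl r a b R : size r <= width -> 1 <= b ->
  corner_lm (rcons zi zl) l r a b R <-> corner_lm zi l (push_right zl r) a b.-1 R.
Proof.
move=> Hr Hb; rewrite /corner_lm (proj1 (@push_right_drop l zi zl r Hr _ _ _) R); last first.
  by rewrite size_rcons; lia.
by have -> : size l + size (rcons zi zl) - b = size l + size zi - b.-1
  by rewrite size_rcons; lia.
Qed.

Lemma inner_violation_split l z0 z zi zl r : size l <= width -> size r <= width ->
  z0 :: z = rcons zi zl ->
  inner_violation (z0 :: z) l r <->
  violated (l ++ (z0 :: z) ++ r) (size l + 1) (size l + size (z0 :: z)) \/
  inner_violation z (push_left l z0) r \/ inner_violation zi l (push_right zl r).
Proof.
move=> Hl Hr E; have Hzi := size_cons_rcons E.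
have [d Hd [Es V]] := push_left_shift z0 z r Hl.
have Vr x y : y <= size l + size zi ->
    violated (l ++ (z0 :: z) ++ r) x y <-> violated (l ++ zi ++ push_right zl r) x y.
  by move=> Hy; rewrite E; exact: (proj2 (@push_right_drop l zi zl r Hr x y Hy)).
split.
- move=> [x [y [Hx Hy HV]]]; rewrite /= in Hy.
  have [Hx2|Hx2] := ltnP (size l + 1) x.
    right; left; exists (x - d), (y - d); split; try lia.
    by apply/(proj2 (V x y _)) => //; lia.
  have [Hy2|Hy2] := ltnP y (size l + size z).+1.
    by right; right; exists x, y; split; [lia | lia | apply/Vr => //; lia].
  have Ex : x = size l + 1 by lia.
  have Ey : y = size l + size (z0 :: z) by rewrite /=; lia.
  by left; rewrite -Ex -Ey.
- case=> [HV|[[x [y [Hx Hy HV]]]|[x [y [Hx Hy HV]]]]].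
  + by exists (size l + 1), (size l + size (z0 :: z)); split.
  + exists (x + d), (y + d); split; rewrite /=; try lia.
    by apply/(proj2 (V _ _ _)); rewrite ?addnK //; lia.
  + by exists x, y; split; [lia | rewrite /=; lia | apply/Vr => //; lia].
Qed.

Section LetterCongruence.
Variables (a1 a2 e1 e2 : Sigma) (t1 t2 i1 i2 : seq Sigma).
Hypothesis E1 : a1 :: t1 = rcons i1 e1.
Hypothesis E2 : a2 :: t2 = rcons i2 e2.
Hypothesis nonempty1 : 0 < size t1.
Hypothesis nonempty2 : 0 < size t2.
Hypothesis behead_eq : state t1 = state t2.
Hypothesis init_eq : state i1 = state i2.

Lemma onth_congr i : i <= width -> onth (a1 :: t1) i = onth (a2 :: t2) i.
Proof.
case: i => [|j] Hj; last exact: (onth_state behead_eq (ltnW Hj)).1.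
rewrite E1 E2 !onth0_rcons ?(size_cons_rcons E1) ?(size_cons_rcons E2) //.
exact: (onth_state init_eq (leq0n width)).1.
Qed.

Lemma onth_rev_congr i : i <= width ->
  onth (rev (a1 :: t1)) i = onth (rev (a2 :: t2)) i.
Proof.
case: i => [|j] Hj; last by rewrite E1 E2 !rev_rcons; exact: (onth_state init_eq (ltnW Hj)).2.
rewrite !rev_cons !onth0_rcons ?size_rev //.
exact: (onth_state behead_eq (leq0n width)).2.
Qed.

End LetterCongruence.

Section LongCongruence.
Variables (a e : Sigma) (t1 t2 i1 i2 : seq Sigma).
Hypothesis E1 : a :: t1 = rcons i1 e.
Hypothesis E2 : a :: t2 = rcons i2 e.
Hypothesis behead_eq : state t1 = state t2.
Hypothesis init_eq : state i1 = state i2.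
Hypothesis long1 : width < size (a :: t1).
Hypothesis long2 : width < size (a :: t2).
Hypothesis prefix_eq : forall i, i <= width -> onth (a :: t1) i = onth (a :: t2) i.
Hypothesis suffix_eq :
  forall i, i <= width -> onth (rev (a :: t1)) i = onth (rev (a :: t2)) i.

Lemma corner_lm_near l r x y R : size l <= width -> size r <= width ->
  x <= c -> y <= c -> 0 < x + y ->
  corner_lm (a :: t1) l r x y R <-> corner_lm (a :: t2) l r x y R.
Proof.
move: long1 long2 => /= L1 L2 Hl Hr Hx Hy Hxy; have [Ex|Hx0] := posnP x.
  rewrite E1 E2 !corner_lm_rcons; try lia.
  by apply: (corner_lm_state init_eq); rewrite ?size_push_right //; lia.
rewrite !corner_lm_behead //; try lia.
by apply: (corner_lm_state behead_eq); rewrite ?size_push_left //; lia.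
Qed.

Lemma corner_congr l r : size l <= width -> size r <= width ->
  (forall R, corner_lm (a :: t1) l r 0 0 R <-> corner_lm (a :: t2) l r 0 0 R) /\
  (violated (l ++ (a :: t1) ++ r) (size l + 1) (size l + size (a :: t1)) <->
   violated (l ++ (a :: t2) ++ r) (size l + 1) (size l + size (a :: t2))).
Proof.
move=> Hl Hr; have cw i : i <= c -> i <= width by lia.
have [A1 A2] := @corner_transfer l (a :: t1) (a :: t2) r
  (fun i Hi => prefix_eq (cw _ Hi))
  (fun i Hi => suffix_eq (cw _ Hi)) long1 long2
  (fun x y R Hx Hy Hxy => (corner_lm_near R Hl Hr Hx Hy Hxy).1).
have [B1 B2] := @corner_transfer l (a :: t2) (a :: t1) r
  (fun i Hi => esym (prefix_eq (cw _ Hi)))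
  (fun i Hi => esym (suffix_eq (cw _ Hi))) long2 long1
  (fun x y R Hx Hy Hxy => (corner_lm_near R Hl Hr Hx Hy Hxy).2).
by split=> [R|]; split; auto.
Qed.

Lemma inner_violation_congr l r : size l <= width -> size r <= width ->
  inner_violation (a :: t1) l r <-> inner_violation (a :: t2) l r.
Proof.
move=> Hl Hr; rewrite (inner_violation_split Hl Hr E1) (inner_violation_split Hl Hr E2).
rewrite (corner_congr Hl Hr).2 (inner_violation_state behead_eq (size_push_left _ Hl) Hr).
by rewrite (inner_violation_state init_eq Hl (size_push_right _ _)).
Qed.

Lemma state_congr_long : state (a :: t1) = state (a :: t2).
Proof.
apply/state_eqP => -[[[i o]|[i o]]|[[[[[l r] x] y] R]|[l r]]] /=.
- by rewrite prefix_eq // -ltnS.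
- by rewrite suffix_eq // -ltnS.
- have Hl := size_bseq l; have Hr := size_bseq r.
  have [Hxy|Hxy] := posnP (x + y); last by apply: corner_lm_near => //; rewrite -ltnS.
  have -> : nat_of_ord x = 0 by lia.
  have -> : nat_of_ord y = 0 by lia.
  exact: (corner_congr Hl Hr).1.
- exact: inner_violation_congr (size_bseq l) (size_bseq r).
Qed.

End LongCongruence.

Definition init (z : seq Sigma) := take (size z).-1 z.

Lemma init_rcons z e : init (rcons z e) = z.
Proof. by rewrite /init size_rcons -cats1 take_size_cat. Qed.

Lemma state_congr z1 z2 : 2 <= size z1 -> 2 <= size z2 ->
  state (behead z1) = state (behead z2) -> state (init z1) = state (init z2) ->
  state z1 = state z2.
Proof.
case: z1 => [|a1 t1] //; case: z2 => [|a2 t2] //= S1 S2 Eb Ei.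
have E1 := lastI a1 t1; have E2 := lastI a2 t2.
rewrite E1 E2 !init_rcons in Ei.
have prefix := onth_congr E1 E2 S1 S2 Eb Ei.
have suffix := onth_rev_congr E1 E2 S1 S2 Eb Ei.
have Ea : a1 = a2 by case: (prefix 0 isT).
have Ee : last a1 t1 = last a2 t2.
  by move: (suffix 0 isT); rewrite E1 E2 !rev_rcons => -[].
subst a2; rewrite -Ee in E2.
have [short|long1] := leqP (size (a1 :: t1)) width.
  by rewrite (eq_from_onth_le short prefix).
have long2 : width < size (a1 :: t2).
  by rewrite -onthTE -prefix // onthTE.
exact: state_congr_long E1 E2 Eb Ei long1 long2 prefix suffix.
Qed.

Definition accepting (t : state_t) : bool := ~~ t (inr (inr ([bseq], [bseq]))).

Lemma accepting_state w : accepting (state w) <-> models w Phi.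
Proof.
rewrite models_iff_no_violation /accepting ffunE /=.
have -> : `[< inner_violation w [::] [::] >] = `[< exists x y, violated w x y >].
  apply: asbool_equiv_eq; split=> [[x [y [_ _]]]|[x [y V]]].
    by rewrite cats0; exists x, y.
  by have [H1 [H2 H3]] := violated_range V; exists x, y; rewrite cats0.
by apply: iff_sym; apply: rwP; exact: asboolPn.
Qed.

(* By [state_congr] all witnesses [z] give the same state; the fallback [p]
   is never used. *)
Definition step_state (p q : state_t) : state_t :=
  if pselect (exists z, [/\ 2 <= size z, state (behead z) = p & state (init z) = q])
    is left ex then state (sval (cid ex)) else p.

Lemma step_stateE z : 2 <= size z ->
  step_state (state (behead z)) (state (init z)) = state z.
Proof.
move=> Hz; rewrite /step_state; case: pselect => [ex|[]]; last by exists z.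
by case: cid => z' [Hz' Eb Ei] /=; apply: state_congr.
Qed.

Definition factor (w : seq Sigma) x y := take (y - x + 1) (drop x.-1 w).

Lemma size_factor w x y : 1 <= x -> x <= y -> y <= size w -> size (factor w x y) = y - x + 1.
Proof. by move=> *; rewrite /factor size_takel // size_drop; lia. Qed.

Lemma behead_factor w x y : 1 <= x -> x < y -> behead (factor w x y) = factor w x.+1 y.
Proof.
move=> H1 H2; rewrite /factor -drop1 -take_drop drop_drop.
by congr (take _ (drop _ w)); lia.
Qed.

Lemma init_factor w x y : 1 <= x -> x < y -> y <= size w -> init (factor w x y) = factor w x y.-1.
Proof.
move=> H1 H2 H3; rewrite /init size_factor ?(ltnW H2) // /factor take_takel; last lia.
by congr take; lia.
Qed.

Lemma factor_letter w x s : onth w x.-1 = Some s -> factor w x x = [:: s].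
Proof.
move=> Hs; have Hx : x.-1 < size w by rewrite -onthTE Hs.
by rewrite /factor subnn add0n (drop_nth s Hx) (@onth_nth _ s s w x.-1 Hs) /= take0.
Qed.

Lemma factor_full w : 1 <= size w -> factor w 1 (size w) = w.
Proof. by move=> H; rewrite /factor drop0 subn1 addn1 prednK // take_size. Qed.

(** * The normal form *)

Local Notation N := #|{: option state_t}|.

Definition rel (t : state_t) : 'I_N := enum_rank (Some t).
Definition rel_bot : 'I_N := enum_rank None.

Lemma rel_inj : injective rel.
Proof. by move=> t1 t2 /enum_rank_inj []. Qed.

Lemma rel_neq_bot t : rel t <> rel_bot.
Proof. by move/enum_rank_inj. Qed.

Definition letter_hyps s : seq (hyp Sigma N) := [:: HEq; HU true (UQ s) VX (Posz 0)].

Definition step_hyps p q : seq (hyp Sigma N) := [:: HLt; HRel (rel p) 1 0; HRel (rel q) 0 1].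

Definition goal_clause : clause Sigma N :=
  Clause [:: HU true (@Umin Sigma) VX (Posz 0); HU true (@Umax Sigma) VY (Posz 0);
          HRel rel_bot 0 0] None.

(* [R_bot x y] records that the factor [w[x..y]] is in a rejecting state. *)
Definition reject_rel t := if accepting t then rel t else rel_bot.

Definition state_clauses (hs : seq (hyp Sigma N)) t : seq (clause Sigma N) :=
  [:: Clause hs (Some (rel t)); Clause hs (Some (reject_rel t))].

Definition trellis : formula Sigma := @Formula Sigma N (goal_clause :: List.app
  (List.flat_map (fun s => state_clauses (letter_hyps s) (state [:: s])) (enum Sigma))
  (List.flat_map (fun pq => state_clauses (step_hyps pq.1 pq.2) (step_state pq.1 pq.2))
     (enum {: state_t * state_t}))).

Lemma trellis_normal : normal_form trellis.
Proof.
exists rel_bot => cl /= [<-|]; first by right; left.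
rewrite List.in_app_iff !List.in_flat_map => -[[s [_ Hcl]]|[[p q] [_ Hcl]]].
  by left; case: Hcl => [|[|[]]] <-; exists s; eexists.
right; right; exists [:: HRel (rel p) 1 0; HRel (rel q) 0 1].
by case: Hcl => [|[|[]]] <-; eexists; (split; first by []) => d [|[|[]]] <-; eexists; auto.
Qed.

Section TrellisSemantics.
Variable w : seq Sigma.
Hypothesis w_nonempty : 1 <= size w.
Implicit Type I : 'I_N -> nat -> nat -> Prop.

Definition tracks I t x y := I (rel t) x y /\ (~~ accepting t -> I rel_bot x y).

Definition derives I hs t := forall x y, 1 <= x -> x <= y -> y <= size w ->
  (forall h, List.In h hs -> hsem w I x y h) -> tracks I t x y.

Lemma state_clauses_sat I hs t :
  (forall cl, List.In cl (state_clauses hs t) -> clause_sat w I cl) <-> derives I hs t.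
Proof.
rewrite /state_clauses /derives /reject_rel.
split=> [H x y H1 H2 H3 Hh | H cl [|[|[]]] <- x y H1 H2 H3 Hh /=].
- split; first exact: (H _ (or_introl erefl) x y H1 H2 H3 Hh).
  move=> Na; have := H _ (or_intror (or_introl erefl)) x y H1 H2 H3 Hh.
  by rewrite /= (negbTE Na).
- exact: (H x y H1 H2 H3 Hh).1.
- have [Hxy Hbot] := H x y H1 H2 H3 Hh.
  by case: ifP => // /negbT.
Qed.

Lemma trellis_sat I :
  (forall cl, List.In cl (clauses trellis) -> clause_sat w I cl) <->
  [/\ clause_sat w I goal_clause, forall s, derives I (letter_hyps s) (state [:: s]) &
      forall p q, derives I (step_hyps p q) (step_state p q)].
Proof.
split=> [H|[Hg Hs Hpq] cl /= [<- //|]].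
  split=> [|s|p q]; first by apply: H; left.
    apply/state_clauses_sat => cl Hcl; apply: H; right; apply/List.in_app_iff; left.
    by apply/List.in_flat_map; exists s; split=> //; exact: In_enum.
  apply/state_clauses_sat => cl Hcl; apply: H; right; apply/List.in_app_iff; right.
  by apply/List.in_flat_map; exists (p, q); split=> //; exact: In_enum.
rewrite List.in_app_iff !List.in_flat_map => -[[s [_ Hcl]]|[[p q] [_ Hcl]]].
  exact: (state_clauses_sat _ _ _).2 (Hs s) _ Hcl.
exact: (state_clauses_sat _ _ _).2 (Hpq p q) _ Hcl.
Qed.

Lemma letter_hyps_sem I s x y : x <= size w ->
  (forall h, List.In h (letter_hyps s) -> hsem w I x y h) <-> x = y /\ onth w x.-1 = Some s.
Proof.
move=> Hx; rewrite !forall_In_cons /= /shiftp addn0 (minn_idPl Hx).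
by split=> [[-> [/eqP -> _]]|[-> /eqP Hs]].
Qed.

Lemma step_hyps_sem I p q x y : 1 <= x -> y <= size w ->
  (forall h, List.In h (step_hyps p q) -> hsem w I x y h) <->
  [/\ x < y, I (rel p) x.+1 y & I (rel q) x y.-1].
Proof.
move=> H1 H2; rewrite !forall_In_cons /=.
suff E : x < y -> [/\ minn (x + 1) (size w) = x.+1, maxn (y - 0) 1 = y,
                      minn (x + 0) (size w) = x & maxn (y - 1) 1 = y.-1].
  split=> [[Hxy]|[Hxy Hp Hq]]; case: (E Hxy) => -> -> -> ->.
    by move=> [[Hp _] [[Hq _] _]].
  by do !split=> //; lia.
by move=> Hxy; split; lia.
Qed.

Lemma goal_clause_sat I : clause_sat w I goal_clause <-> ~ I rel_bot 1 (size w).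
Proof.
split=> [H Hb|Hb x y H1 H2 H3].
  have [E1 E2 E3] : [/\ minn (1 + 0) (size w) = 1, minn (size w + 0) (size w) = size w
                     & maxn (size w - 0) 1 = size w] by split; lia.
  by apply: (H 1 (size w)) => // h [<-|[<-|[<-|[]]]]; rewrite /= /shiftp ?E1 ?E2 ?E3.
move=> /forall_In_cons [/eqP Ex /forall_In_cons [/eqP Ey /forall_In_cons [[HI _] _]]].
move: Ex Ey HI; rewrite /shiftp !addn0 => -> Ey.
by have -> : maxn (y - 0) 1 = size w by lia.
Qed.

Lemma trellis_tracks I :
  (forall cl, List.In cl (clauses trellis) -> clause_sat w I cl) ->
  forall x y, 1 <= x -> x <= y -> y <= size w -> tracks I (state (factor w x y)) x y.
Proof.
case/trellis_sat=> _ Hletter Hstep x y H1 H2 H3.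
move Hm : (y - x) => m; elim: m x y Hm H1 H2 H3 => [|m IH] x y Hm H1 H2 H3.
  have Exy : y = x by lia.
  subst y; have : x.-1 < size w by lia.
  rewrite -onthTE; case Hs: onth => [s|] // _.
  rewrite (factor_letter Hs); apply: Hletter => //; exact/letter_hyps_sem.
have Hsz : 2 <= size (factor w x y) by rewrite size_factor; lia.
rewrite -(step_stateE Hsz) behead_factor ?init_factor //; try lia.
apply: Hstep => //; apply/step_hyps_sem => //; split; first lia.
- by have [] : tracks I (state (factor w x.+1 y)) x.+1 y by apply: IH; lia.
- by have [] : tracks I (state (factor w x y.-1)) x y.-1 by apply: IH; lia.
Qed.

Definition trellis_interp R x y :=
  R = rel (state (factor w x y)) \/ (R = rel_bot /\ ~~ accepting (state (factor w x y))).

Lemma tracks_trellis_interp x y : tracks trellis_interp (state (factor w x y)) x y.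
Proof. by split; [left | right]. Qed.

Lemma trellis_interp_rel t x y : trellis_interp (rel t) x y -> t = state (factor w x y).
Proof. by case=> [/rel_inj|[/rel_neq_bot]]. Qed.

Lemma trellis_interp_sat : accepting (state w) ->
  forall cl, List.In cl (clauses trellis) -> clause_sat w trellis_interp cl.
Proof.
move=> Ha; apply/trellis_sat; split.
- apply/goal_clause_sat => -[/esym/rel_neq_bot //|[_]].
  by rewrite factor_full // Ha.
- move=> s x y H1 H2 H3 /(letter_hyps_sem _ _ _ (leq_trans H2 H3)) [<- Hs].
  by rewrite -(factor_letter Hs); exact: tracks_trellis_interp.
- move=> p q x y H1 H2 H3 /(step_hyps_sem _ _ _ H1 H3) [Hxy /trellis_interp_rel Ep /trellis_interp_rel Eq].
  have Hsz : 2 <= size (factor w x y) by rewrite size_factor; lia.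
  rewrite Ep Eq -behead_factor // -init_factor // step_stateE //.
  exact: tracks_trellis_interp.
Qed.

Lemma models_trellis : models w trellis <-> accepting (state w).
Proof.
split=> [[I HI]|Ha]; last by exists trellis_interp; exact: trellis_interp_sat.
have [_ Hbot] := trellis_tracks HI (leqnn 1) w_nonempty (leqnn _).
have [/goal_clause_sat Hg _ _] := (trellis_sat I).1 HI.
rewrite factor_full // in Hbot.
by case: (boolP (accepting (state w))) => // /Hbot /Hg.
Qed.

End TrellisSemantics.
End Normalization.

Unset Implicit Arguments.

Theorem lemma2 (Sigma : finType) (Phi : formula Sigma) :
  exists Phi' : formula Sigma,
    normal_form Phi' /\
    forall w : seq Sigma, w <> [::] -> (models w Phi <-> models w Phi').
Proof.
exists (trellis Phi); split; first exact: trellis_normal.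
move=> w Hw; have Hn : 0 < size w by case: w Hw.
by rewrite (models_trellis Phi Hn) accepting_state.
Qed.
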